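(* Every unicellular fatgraph $\mathbb{G}$ of (Euler) genus $g$ satisfies $d(\mathbb{G})\ge g$.
   Context: A (rooted) fatgraph with $n$ ribbons is $\mathbb{G}=([2n+1],\sigma,\gamma,\omega)$: sectors $[2n+1]$; permutations $\sigma,\gamma$ whose cycles are vertices and boundary components, $\sigma(2n+1)=\gamma(2n+1)=1$; orientations $\omega:[2n+1]\to\{\pm1\}$ with $\omega(1)=\omega(2n+1)$; the pairs $(x,\sigma(x))$, $x\ne2n+1$, are matched into ribbons $((x,\sigma(x)),(y,\sigma(y)))$, untwisted ($x,\sigma(y)$ and $\sigma(x),y$ $\gamma$-consecutive, $\omega(x)=\omega(\sigma(y))$, $\omega(\sigma(x))=\omega(y)$) or twisted ($x,y$ and $\sigma(x),\sigma(y)$ $\gamma$-consecutive, $\omega(x)=-\omega(y)$, $\omega(\sigma(x))=-\omega(\sigma(y))$). Flipping a vertex reverses its cyclic order and negates its sectors' orientations. Euler genus: $2-g=v-e+b$ ($v$ vertices, $e$ ribbons, $b$ boundary components). Unicellular: $\gamma=(1,\dots,2n+1)$ with order $<_\gamma$. Reversals for sectors $i<_\gamma j$: gluing (distinct vertices $(i,i_1,\dots,i_p),(j,j_1,\dots,j_q)$, after flipping $\omega(i)=-\omega(j)$, become $(i,j_1,\dots,j_q,j,i_1,\dots,i_p)$); slicing (vertex $(i,j_1,\dots,j_q,j,i_1,\dots,i_p)$ with $\omega(i)=-\omega(j)$ becomes $(i,i_1,\dots,i_p)$, $(j,j_1,\dots,j_q)$); half-flipping (same vertex with $\omega(i)=\omega(j)$: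 split, flip $(j,j_1,\dots,j_q)$, glue back along $i,j$, giving $(i,j_q,\dots,j_1,j,i_1,\dots,i_p)$). The r-distance $d(\mathbb{G})$ is the minimum number of reversals transforming $\mathbb{G}$ into a unicellular fatgraph of genus $0$ (a plane tree). *)

From HB Require Import structures.
From mathcomp Require Import all_boot all_order all_algebra all_fingroup.

Set Implicit Arguments.
Unset Strict Implicit.
Unset Printing Implicit Defensive.

(* Sectors [2n+1] = {1,...,2n+1}, encoded 0-based: sector k is the ordinal k-1.
   Sector 1 is ord0, sector 2n+1 is ord_max. *)
Notation sector n := 'I_(n.*2).+1.

(* Raw data of a rooted fatgraph with n ribbons: (sigma, gamma, omega);
   omega x = true encodes orientation +1, false encodes -1. *)
Record fatgraph (n : nat) := Fatgraph {
  sg : {perm sector n};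
  gm : {perm sector n};
  om : {ffun sector n -> bool}
}.

Section Fatgraphs.
Variable n : nat.
Implicit Types (G : fatgraph n) (x y i j : sector n).

Definition gcons G (a b : sector n) : Prop := gm G a = b \/ gm G b = a.

Definition untwisted_ribbon G x y : Prop :=
  [/\ gcons G x (sg G y), gcons G (sg G x) y,
      om G x = om G (sg G y) & om G (sg G x) = om G y].

Definition twisted_ribbon G x y : Prop :=
  [/\ gcons G x y, gcons G (sg G x) (sg G y),
      om G x = ~~ om G y & om G (sg G x) = ~~ om G (sg G y)].

(* The pairs (x, sigma x), x <> 2n+1, are identified with x; a matching into
   ribbons is a fixed-point-free involution m on the sectors other than 2n+1. *)
Definition is_fatgraph G : Prop :=
  [/\ sg G ord_max = ord0, gm G ord_max = ord0, om G ord0 = om G ord_max &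
   exists m : sector n -> sector n,
     forall x, x != ord_max ->
       [/\ m x != ord_max, m x != x, m (m x) = x &
           untwisted_ribbon G x (m x) \/ twisted_ribbon G x (m x)]].

(* vertices = cycles of sigma, boundary components = cycles of gamma *)
Definition nverts G : nat := #|porbits (sg G)|.
Definition nbound G : nat := #|porbits (gm G)|.

(* Euler genus: 2 - g = v - e + b, with e = n ribbons. *)
Definition genus G : int := ((2 + n)%:Z - (nverts G)%:Z - (nbound G)%:Z)%R.

Definition unicellular G : Prop := forall x, gm G x = ordS x.

Definition flipped G x G1 : Prop :=
  [/\ gm G1 = gm G,
      forall y, sg G1 y = if y \in porbit (sg G) x then ((sg G)^-1)%g y else sg G y
    & forall y, om G1 y = if y \in porbit (sg G) x then ~~ om G y else om G y].

Definition transposed G i j G' : Prop :=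
  [/\ gm G' = gm G, om G' = om G & forall y, sg G' y = sg G (tperm i j y)].

(* Reversals for sectors i <_gamma j.  Since reversals keep gamma and we only
   use them starting from unicellular fatgraphs, <_gamma is the natural order. *)
Definition gluing G i j G' : Prop :=
  [/\ (i < j)%N, j \notin porbit (sg G) i &
      (om G i != om G j /\ transposed G i j G') \/
      (om G i = om G j /\
        exists G1, (flipped G i G1 \/ flipped G j G1) /\ transposed G1 i j G')].

Definition slicing G i j G' : Prop :=
  [/\ (i < j)%N, j \in porbit (sg G) i, om G i != om G j & transposed G i j G'].

(* split along i, j; flip the vertex (j, j1, ..., jq); glue back along i, j *)
Definition half_flipping G i j G' : Prop :=
  [/\ (i < j)%N, j \in porbit (sg G) i, om G i = om G j &
      exists G1 G2, [/\ transposed G i j G1, flipped G1 j G2 & transposed G2 i j G']].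

Definition reversal G G' : Prop :=
  is_fatgraph G' /\
  exists i j, [\/ gluing G i j G', slicing G i j G' | half_flipping G i j G'].

Fixpoint reversal_chain (k : nat) G H : Prop :=
  match k with
  | 0 => G = H
  | k'.+1 => exists G', reversal G G' /\ reversal_chain k' G' H
  end.

Definition plane_tree G : Prop := is_fatgraph G /\ unicellular G /\ genus G = 0%R.

End Fatgraphs.

(* Reversals never change gamma, so along a sequence of reversals only the
   number v of vertices (cycles of sigma) moves in g = 2 + n - v - b.  Each
   reversal composes sigma with transpositions, which changes the number of
   cycles by exactly one, and with vertex flips, which keep every cycle as a
   set; a half-flip splits a vertex and glues the two halves back, so it keeps
   v.  Hence every reversal lowers the genus by at most one, and reaching a
   plane tree (genus 0) from genus g takes at least g reversals. *)
From mathcomp Require Import all_boot all_order all_algebra all_fingroup.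
From mathcomp Require Import zify.
Import Order.TTheory GRing.Theory Num.Theory.

Set Implicit Arguments.
Unset Strict Implicit.
Unset Printing Implicit Defensive.

Section PermCycles.
Variable T : finType.
Implicit Types (p q : {perm T}) (i j x : T).
Local Open Scope group_scope.

Lemma card_porbits_mul_tperm_le p i j :
  (#|porbits (tperm i j * p)| <= #|porbits p| + 1)%N.
Proof.
have := porbits_mul_tperm p i j; case: (i != j); case: (i \notin _) => /=; lia.
Qed.

Lemma card_porbits_mul_tperm_split p i j : i != j -> i \in porbit p j ->
  #|porbits (tperm i j * p)| = (#|porbits p| + 1)%N.
Proof. by move=> neq_ij pji; have /= := porbits_mul_tperm p i j; rewrite neq_ij pji addn0. Qed.

Lemma card_porbits_mul_tperm_join p i j : i \notin porbit p j ->
  (#|porbits (tperm i j * p)| + 1)%N = #|porbits p|.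
Proof.
move=> pji; have neq_ij : i != j by apply: contraNneq pji => ->; apply: porbit_id.
by have /= := porbits_mul_tperm p i j; rewrite neq_ij pji /= doubleS double0; lia.
Qed.

(* Otherwise the second transposition would split a cycle too, yet the two
   transpositions compose back to p. *)
Lemma porbit_mul_tperm_split p i j : i != j -> i \in porbit p j ->
  i \notin porbit (tperm i j * p) j.
Proof.
move=> neq_ij pji; apply/negP => qji.
have undo : tperm i j * (tperm i j * p) = p by rewrite mulgA tperm2 mul1g.
have := card_porbits_mul_tperm_split neq_ij qji.
by rewrite undo (card_porbits_mul_tperm_split neq_ij pji); lia.
Qed.

Lemma porbit_subset_of_step p q : (forall z, q z \in porbit p z) ->
  forall y, porbit q y \subset porbit p y.
Proof.
move=> qp y; apply/subsetP => _ /porbitP [k ->].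
elim: k => [|k IHk]; first by rewrite expg0 perm1 porbit_id.
rewrite expgSr permM.
have /eqP orbE : porbit p ((q ^+ k) y) == porbit p y by rewrite eq_porbit_mem.
by rewrite -orbE qp.
Qed.

Lemma porbit_reverse_on p x q :
  (forall z, q z = if z \in porbit p x then p^-1 z else p z) ->
  porbit q =1 porbit p.
Proof.
move=> qE y.
have step (r : {perm T}) u : r u \in porbit r u.
  by have := mem_porbit r 1 u; rewrite expg1.
apply/eqP; rewrite eqEsubset; apply/andP; split.
  apply: porbit_subset_of_step => z; rewrite qE; case: ifP => _; last exact: step.
  by rewrite -porbitV; apply: step.
apply: porbit_subset_of_step => z.
case zx: (z \in porbit p x); last by have := step q z; rewrite qE zx.
have pzx : p z \in porbit p x.
  by have := porbit_perm p 1 z; rewrite expg1 -eq_porbit_mem => ->; rewrite eq_porbit_mem.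
by rewrite porbit_sym; have := step q (p z); rewrite qE pzx permK.
Qed.

End PermCycles.

Section Reversals.
Variable n : nat.
Implicit Types (G H : fatgraph n) (i j x : sector n).

Lemma transposed_sg G G' i j :
  transposed G i j G' -> sg G' = (tperm i j * sg G)%g.
Proof. by case=> _ _ sgE; apply/permP => y; rewrite sgE permM. Qed.

Lemma flipped_porbit G G1 x : flipped G x G1 -> porbit (sg G1) =1 porbit (sg G).
Proof. by case=> _ sgE _; apply: porbit_reverse_on sgE. Qed.

Lemma nverts_flipped G G1 x : flipped G x G1 -> nverts G1 = nverts G.
Proof. by move=> /flipped_porbit orbE; rewrite /nverts /porbits (eq_imset _ orbE). Qed.

Lemma nverts_transposed_le G G' i j :
  transposed G i j G' -> nverts G' <= nverts G + 1.
Proof. by move=> /transposed_sg sgE; rewrite /nverts sgE card_porbits_mul_tperm_le. Qed.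

Lemma nverts_half_flipping G G' i j : half_flipping G i j G' -> nverts G' = nverts G.
Proof.
case=> lt_ij ji _ [G1 [G2 [t1 f t2]]].
have neq_ij : i != j by rewrite neq_ltn lt_ij.
have ij : i \in porbit (sg G) j by rewrite porbit_sym.
have split1 : nverts G1 = nverts G + 1.
  by rewrite /nverts (transposed_sg t1) card_porbits_mul_tperm_split.
have apart : i \notin porbit (sg G2) j.
  by rewrite (flipped_porbit f) (transposed_sg t1) porbit_mul_tperm_split.
have join2 : nverts G' + 1 = nverts G2.
  by rewrite /nverts (transposed_sg t2) card_porbits_mul_tperm_join.
by move: join2; rewrite (nverts_flipped f) split1 => /addIn.
Qed.

Lemma gm_reversal G G' : reversal G G' -> gm G' = gm G.
Proof.
case=> _ [i [j [[_ _ [[_ t] | [_ [G1 [f t]]]]] | [_ _ _ t] | [_ _ _ [G1 [G2 [t1 f t2]]]]]]].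
- by case: t.
- by case: t => -> _ _; case: f => -[-> _ _].
- by case: t.
- by case: t2 => -> _ _; case: f => -> _ _; case: t1.
Qed.

Lemma nverts_reversal_le G G' : reversal G G' -> nverts G' <= nverts G + 1.
Proof.
case=> _ [i [j [[_ _ [[_ t] | [_ [G1 [f t]]]]] | [_ _ _ t] | /nverts_half_flipping ->]]].
- exact: nverts_transposed_le t.
- by case: f => f; rewrite -(nverts_flipped f); apply: nverts_transposed_le t.
- exact: nverts_transposed_le t.
- by rewrite leq_addr.
Qed.

Lemma reversal_chain_invariants k G H : reversal_chain k G H ->
  gm H = gm G /\ nverts H <= nverts G + k.
Proof.
elim: k G => [|k IHk] G /=; first by move=> ->; rewrite addn0.
case=> G' [rev /IHk [gmH vH]]; split; first by rewrite gmH (gm_reversal rev).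
by have := nverts_reversal_le rev; lia.
Qed.

End Reversals.

(* d(G) >= g, with d(G) the minimum length of a reversal sequence from G to a
   plane tree (infinite if none exists): every such sequence has length >= g. *)
Theorem corollary1 (n : nat) (G : fatgraph n) :
  is_fatgraph G -> unicellular G ->
  forall (k : nat) (H : fatgraph n), reversal_chain k G H -> plane_tree H ->
  (genus G <= Posz k)%R.
Proof.
move=> _ _ k H /reversal_chain_invariants [gmH vH] [_ [_ genusH]].
move: genusH; rewrite /genus /nbound gmH.
lia.
Qed.
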